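(* Let $\mathcal{G}$ be a simple temporal clique and let $\mathcal{T}^-=(V,E^-_T)$ be obtained by the forward construction. Every vertex $v$ that is not an emitter can reach a vertex $v'$ lying in the same in-tree of $\mathcal{T}^-$ as $v$ (emitter or not) by a journey of length at most two whose last edge is $e^-(v')$.
   Context: A simple temporal clique is a pair $\mathcal{G}=(G,\lambda)$ where $G=(V,E)$ is the complete graph on a finite vertex set $V$ and $\lambda:E\to\mathbb{N}$ assigns to each edge a single integer label such that any two distinct edges sharing an endpoint have different labels; the label of an arc $(x,y)$ is $\lambda(\{x,y\})$. A journey from $x$ to $y$ is a sequence of vertices $x=u_0,\dots,u_k=y$ ($k\ge1$) with $\lambda(\{u_{i-1},u_i\})<\lambda(\{u_i,u_{i+1}\})$ for $1\le i<k$; its length is $k$ and its last edge is $\{u_{k-1},u_k\}$. For a vertex $v$, $e^-(v)$ is the edge incident to $v$ with smallest label. Forward construction: let $E^-$ be the set of arcs $(u,v)$ with $\{u,v\}=e^-(v)$, except that if $e^-(u)=e^-(v)=\{u,v\}$ only one of the two arcs $(u,v),(v,u)$ is included (arbitrarily). Initialize $E^-_T:=E^-$. For every vertex $v$ of out-degree at least $2$ in $(V,E^-)$, let $(v,u_1),\dots,(v,u_\ell)$ be its out-arcs in $E^-$, where $(v,u_\ell)$ has the largest label; for each $i<\ell$, if $u_i$ has out-degree $0$ in $(V,E^-)$, replace $(v,u_i)$ by $(u_i,v)$ in $E^-_T$, and otherwise remove $(v,u_i)$ from $E^-_T$. Set $\mathcal{T}^-=(V,E^-_T)$. Its weakly connected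 components are called in-trees; an emitter is a vertex of out-degree $0$ in $\mathcal{T}^-$. *)

From mathcomp Require Import all_boot.
Set Implicit Arguments. Unset Strict Implicit. Unset Printing Implicit Defensive.

Section TemporalClique.
Variable T : finType.
(* The label of the edge {x,y} (x != y) of the complete graph on T is lab x y;
   values lab x x are irrelevant. *)
Variable lab : T -> T -> nat.

Definition simple_temporal_clique : Prop :=
  (forall x y, lab x y = lab y x) /\
  (forall x y z, x != y -> x != z -> y != z -> lab x y != lab x z).

(* minnb v u <=> e^-(v) = {v,u}: the edge at v with smallest label. *)
Definition minnb (v u : T) : bool :=
  (u != v) && [forall w, (w != v) ==> (lab v u <= lab v w)].

(* Em is a valid choice of E^-: the arcs (u,v) with {u,v} = e^-(v), where
   when e^-(u) = e^-(v) = {u,v} exactly one of (u,v),(v,u) is kept. *)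
Definition valid_Em (Em : rel T) : Prop :=
  (forall u v, Em u v -> minnb v u) /\
  (forall u v, minnb v u -> ~~ minnb u v -> Em u v) /\
  (forall u v, minnb v u -> minnb u v -> (Em u v && ~~ Em v u) || (Em v u && ~~ Em u v)).

Definition outdeg (E : rel T) (x : T) : nat := #|[pred y | E x y]|.

Definition max_out (E : rel T) (x y : T) : bool :=
  E x y && [forall z, E x z ==> (lab x z <= lab x y)].

Definition ET (Em : rel T) : rel T := fun x y =>
  (Em x y && ((outdeg Em x < 2) || max_out Em x y)) ||
  [&& Em y x, 2 <= outdeg Em y, ~~ max_out Em y x & outdeg Em x == 0].

Definition emitter (Em : rel T) (v : T) : bool := outdeg (ET Em) v == 0.

Definition same_intree (Em : rel T) (x y : T) : bool :=
  connect [rel a b | ET Em a b || ET Em b a] x y.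

(* Journey u_0 = x, u_1, ..., u_k (k = size t >= 1) given as x :: t:
   consecutive vertices are distinct (they form edges) and the labels of the
   consecutive edges are strictly increasing. *)
Definition journey (x : T) (t : seq T) : bool :=
  [&& t != [::], path (fun a b => a != b) x t &
      sorted ltn [seq lab e.1 e.2 | e <- zip (x :: t) t]].

End TemporalClique.

From mathcomp Require Import all_boot.

(* A non-emitter v has an out-arc (v, y) in T^-.  If it is an original arc of
   E^-, then {v, y} = e^-(y) and the one-edge journey v, y works.  Otherwise it
   is a reversed arc: (y, v) was a non-maximal out-arc of y in E^-, and the
   out-arc (y, z) of y with largest label survives in T^-.  Its label exceeds
   that of {v, y} (maximality plus properness), so v, y, z is a journey ending
   with {y, z} = e^-(z), and z lies in the in-tree of v through y. *)

Set Implicit Arguments.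
Unset Strict Implicit.
Unset Printing Implicit Defensive.

Section Journeys.
Variables (T : finType) (lab : T -> T -> nat).

Lemma journey1 (x y : T) : x != y -> journey lab x [:: y].
Proof. by rewrite /journey /= => ->. Qed.

Lemma journey2 (x y z : T) :
  x != y -> y != z -> lab x y < lab y z -> journey lab x [:: y; z].
Proof. by rewrite /journey /= => -> -> ->. Qed.

Lemma minnb_neq (v u : T) : minnb lab v u -> u != v.
Proof. by case/andP. Qed.

Lemma exists_max_out (E : rel T) (x y : T) :
  E x y -> exists z, max_out lab E x z.
Proof.
move=> Exy; case: (arg_maxnP (lab x) Exy) => z Exz zmax.
by exists z; rewrite /max_out Exz; apply/forallP => w; apply/implyP/zmax.
Qed.

End Journeys.

Section ForwardConstruction.
Variables (T : finType) (lab : T -> T -> nat) (Em : rel T).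

Lemma ET_same_intree (x y : T) : ET lab Em x y -> same_intree lab Em x y.
Proof. by move=> Exy; apply: connect1; rewrite /= Exy. Qed.

Lemma max_out_ET (x y : T) : max_out lab Em x y -> ET lab Em x y.
Proof. by move=> mxy; rewrite /ET mxy orbT andbT; case/andP: mxy => ->. Qed.

Lemma ET_kept_or_reversed (x y : T) :
  ET lab Em x y -> Em x y \/ Em y x /\ ~~ max_out lab Em y x.
Proof.
by case/orP => [/andP [-> _] | /and4P [Eyx _ nmax _]]; [left | right].
Qed.

Hypothesis lab_sym : forall x y, lab x y = lab y x.
Hypothesis lab_proper :
  forall x y z, x != y -> x != z -> y != z -> lab x y != lab x z.
Hypothesis Em_minnb : forall u v, Em u v -> minnb lab v u.

Lemma reversed_arc_journey (v y : T) :
  Em y v -> ~~ max_out lab Em y v ->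
  exists z, [/\ ET lab Em y z, journey lab v [:: y; z] & minnb lab z y].
Proof.
move=> Eyv nmax; have [z mz] := exists_max_out lab Eyv.
have /andP [Eyz /forallP zmax] := mz.
have yv : y != v := minnb_neq (Em_minnb Eyv).
have yz : y != z := minnb_neq (Em_minnb Eyz).
have vz : v != z by apply: contraNneq nmax => ->.
have lab_vy_lt : lab v y < lab y z.
  by rewrite lab_sym ltn_neqAle lab_proper // (implyP (zmax v)).
exists z; split; [exact: max_out_ET | | exact: Em_minnb].
by apply: journey2; rewrite // eq_sym.
Qed.

End ForwardConstruction.

Theorem lemma4 (T : finType) (lab : T -> T -> nat) (Em : rel T) :
  simple_temporal_clique lab ->
  valid_Em lab Em ->
  forall v : T, ~~ emitter lab Em v ->
  exists (v' : T) (t : seq T),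
    [/\ same_intree lab Em v v',
        journey lab v t,
        size t <= 2,
        last v t = v' &
        minnb lab v' (last v (belast v t))].
Proof.
move=> [lab_sym lab_proper] [Em_minnb _] v.
rewrite /emitter /outdeg -lt0n => /card_gt0P [y]; rewrite inE /= => Evy.
have vy_tree := ET_same_intree Evy.
case: (ET_kept_or_reversed Evy) => [Em_vy | [Em_yv nmax]].
  have yv_min := Em_minnb _ _ Em_vy.
  exists y, [:: y]; split => //.
  exact: journey1 (minnb_neq yv_min).
have [z [Eyz vyz_journey zy_min]] :=
  reversed_arc_journey lab_sym lab_proper Em_minnb Em_yv nmax.
exists z, [:: y; z]; split => //.
exact: connect_trans vy_tree (ET_same_intree Eyz).
Qed.
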